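(* Let $G$ be a finite vertex-transitive simple graph, let $v$ be any vertex of $G$, and let $P$ be a solvable pebble distribution on $G$. Then $$|P|\geq \frac{|V(G)|+\mathrm{TE}(P)}{\mathrm{ef}(v)}.$$
   Context: A pebble distribution on $G$ is a function $P:V(G)\to\mathbb{Z}_{\geq 0}$ with size $|P|=\sum_v P(v)$. A pebbling move from a vertex $u$ with at least two pebbles to an adjacent vertex removes two pebbles from $u$ and adds one to the neighbor. A vertex $w$ is $k$-reachable under $P$ if some executable sequence of pebbling moves yields at least $k$ pebbles on $w$; reachable means $1$-reachable; $P$ is solvable if all vertices are reachable. $\mathrm{reach}(P,w)$ is the largest such $k$. The excess $\mathrm{exc}(P,w)$ is $\mathrm{reach}(P,w)-1$ if $w$ is reachable and $0$ otherwise, and $\mathrm{TE}(P)=\sum_{w}\mathrm{exc}(P,w)$. With $N_i(v)$ the set of vertices at distance exactly $i$ from $v$, $\mathrm{ef}(v)=\sum_{i\geq 0}(1/2)^i|N_i(v)|$ (independent of $v$ for vertex-transitive $G$). *)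

From Stdlib Require Import ClassicalEpsilon Relation_Operators.
From mathcomp Require Import all_boot all_order all_algebra all_fingroup.
Set Implicit Arguments. Unset Strict Implicit. Unset Printing Implicit Defensive.
Import Order.TTheory GRing.Theory Num.Theory.

Definition simple_graph (T : finType) (e : rel T) : Prop :=
  symmetric e /\ irreflexive e.

Definition vertex_transitive (T : finType) (e : rel T) : Prop :=
  forall u v : T, exists f : {perm T},
    (forall x y, e (f x) (f y) = e x y) /\ f u = v.

Fixpoint walkn (T : finType) (e : rel T) (k : nat) (v w : T) : bool :=
  match k with
  | 0 => v == w
  | k'.+1 => [exists u, e v u && walkn e k' u w]
  end.

Definition dist_le (T : finType) (e : rel T) (v w : T) (i : nat) : bool :=
  [exists j : 'I_i.+1, walkn e j v w].

Definition Nset (T : finType) (e : rel T) (v : T) (i : nat) : {set T} :=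
  [set w | dist_le e v w i & (if i is i'.+1 then ~~ dist_le e v w i' else true)].

(* ef(v) = sum_{i>=0} (1/2)^i |N_i(v)|; every finite distance is < #|T|,
   so N_i(v) is empty for i >= #|T| and the sum is truncated there. *)
Definition ef (T : finType) (e : rel T) (v : T) : rat :=
  (\sum_(i < #|T|) (2%:R ^- i) * #|Nset e v i|%:R)%R.

Definition pdist (T : finType) := {ffun T -> nat}.

Definition psize (T : finType) (P : pdist T) : nat := \sum_v P v.

Definition pmove (T : finType) (e : rel T) (P Q : pdist T) : Prop :=
  exists u w, [/\ e u w, 2 <= P u &
    Q = [ffun x => if x == u then P x - 2
                   else if x == w then (P x).+1 else P x]].

Definition preaches (T : finType) (e : rel T) : pdist T -> pdist T -> Prop :=
  clos_refl_trans (pdist T) (@pmove T e).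

Definition kreachable (T : finType) (e : rel T) (P : pdist T) (w : T) (k : nat)
  : Prop := exists Q, preaches e P Q /\ k <= Q w.

Definition reachable (T : finType) (e : rel T) (P : pdist T) (w : T) : Prop :=
  kreachable e P w 1.

Definition solvable (T : finType) (e : rel T) (P : pdist T) : Prop :=
  forall w, reachable e P w.

Definition pdec (A : Prop) : bool :=
  if excluded_middle_informative A then true else false.

(* reach(P,w): the largest k such that w is k-reachable. Pebbling moves never
   increase the number of pebbles, so such k are <= |P|. *)
Definition reach (T : finType) (e : rel T) (P : pdist T) (w : T) : nat :=
  \max_(k < (psize P).+1 | pdec (kreachable e P w k)) k.

Definition exc (T : finType) (e : rel T) (P : pdist T) (w : T) : nat :=
  if pdec (reachable e P w) then (reach e P w).-1 else 0.

Definition TE (T : finType) (e : rel T) (P : pdist T) : nat :=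
  \sum_w exc e P w.

(** Give a pebble on [u] the value [2^-d(u,w)] as seen from [w]; the potential
    of [P] at [w] is the total value of its pebbles.  A pebbling move from [u]
    to a neighbour [x] trades two pebbles of value [2^-d(u,w)] for one of value
    [2^-d(x,w) <= 2 * 2^-d(u,w)], so the potential never increases, while it
    always dominates the number of pebbles on [w].  Hence
    [1 + exc(P,w) <= reach(P,w) <= pot_P(w)] for every (reachable) [w], and
    summing over [w] gives [|V| + TE(P) <= sum_u P(u) ef(u) = |P| ef(v)]. *)

From Stdlib Require Import ClassicalEpsilon.
From mathcomp Require Import all_boot all_order all_algebra all_fingroup.
From mathcomp Require Import lra.
Import Order.TTheory GRing.Theory Num.Theory.
Set Implicit Arguments. Unset Strict Implicit.

Lemma ler_expVn2 (R : numFieldType) (m k : nat) :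
  (m <= k.+1)%N -> (2%:R ^- k <= 2 * 2%:R ^- m :> R)%R.
Proof.
move=> le_m_k; rewrite -!exprVn.
have -> : ((2%:R^-1 : R) ^+ k = 2 * 2%:R^-1 ^+ k.+1)%R.
  by rewrite exprSr mulrCA mulfV ?mulr1 ?pnatr_eq0.
by rewrite ler_pM2l //; apply: ler_wiXn2l; rewrite ?invr_ge0 ?invf_le1 ?ler1n.
Qed.

Lemma sumr_eq_natr (R : pzSemiRingType) (I : finType) (i : I) (F : I -> R) :
  (\sum_j (j == i)%:R * F j = F i)%R.
Proof.
rewrite (bigD1 i) //= eqxx mul1r big1 ?addr0 // => j /negbTE ->.
by rewrite mul0r.
Qed.

Lemma pdecP (A : Prop) : pdec A -> A.
Proof. by rewrite /pdec; case: excluded_middle_informative. Qed.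

Lemma pdecT (A : Prop) : A -> pdec A.
Proof. by rewrite /pdec; case: excluded_middle_informative. Qed.

Section Distance.

Variables (T : finType) (e : rel T).

Lemma walknP k a b :
  reflect (exists p, [/\ path e a p, last a p = b & size p = k]) (walkn e k a b).
Proof.
elim: k a => [|k IH] a /=.
  apply: (iffP eqP) => [->|[p [_ <- /eqP]]]; first by exists [::].
  by rewrite size_eq0 => /eqP ->.
apply: (iffP existsP) => [[u /andP[eau /IH [p [pp lp sp]]]]|[[|u p] [] //=]].
  by exists (u :: p); rewrite /= eau pp lp sp.
move=> /andP[eau pp] lp [sp]; exists u; rewrite eau /=; apply/IH; by exists p.
Qed.

Lemma dist_le_leq u w i j : dist_le e u w i -> (i <= j)%N -> dist_le e u w j.
Proof.
move=> /existsP[k walk_k] le_ij; apply/existsP.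
by exists (Ordinal (leq_trans (ltn_ord k) (le_ij : (i < j.+1)%N))).
Qed.

Lemma dist_le_card u w i : dist_le e u w i -> dist_le e u w #|T|.-1.
Proof.
move=> /existsP[k /walknP [p [pp lp _]]].
case: (shortenP pp) lp => q pq uq _ lq.
have lt_q : (size q < #|T|)%N
  by have := max_card (mem (u :: q)); rewrite (card_uniqP uq).
apply/existsP; exists (Ordinal (leq_trans lt_q (leqSpred _))).
by apply/walknP; exists q.
Qed.

Lemma dist_le_edge u x w i : e u x -> dist_le e x w i -> dist_le e u w i.+1.
Proof.
move=> eux /existsP[k walk_k]; apply/existsP.
exists (Ordinal (ltn_ord k : (k.+1 < i.+2)%N)) => /=.
by apply/existsP; exists x; rewrite eux.
Qed.

Lemma NsetP u w m :
  reflect (dist_le e u w m /\ forall j, (j < m)%N -> ~~ dist_le e u w j)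
          (w \in Nset e u m).
Proof.
rewrite inE; apply: (iffP andP) => -[dm min_m]; split=> //.
- case: m dm min_m => // m _ not_dm j lt_jm.
  by apply: contra not_dm => /dist_le_leq; apply.
- by case: m dm min_m => // m _ min_m; apply: min_m.
Qed.

Lemma Nset_uniq u w m n :
  w \in Nset e u m -> w \in Nset e u n -> m = n.
Proof.
move=> /NsetP[dm min_m] /NsetP[dn min_n].
by case: (ltngtP m n) => // [/min_n|/min_m]; rewrite ?dm ?dn.
Qed.

Lemma Nset_exists u w i :
  dist_le e u w i -> exists2 m, (m <= i)%N & w \in Nset e u m.
Proof.
move=> di; have ex_d : exists m, dist_le e u w m by exists i.
case: (ex_minnP ex_d) => m dm min_m; exists m; first exact: min_m.
apply/NsetP; split=> // j lt_jm; apply/negP => /min_m.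
by rewrite leqNgt lt_jm.
Qed.

Lemma Nset_lt_card u w m : w \in Nset e u m -> (m < #|T|)%N.
Proof.
move=> /NsetP[dm min_m]; rewrite ltnNge; apply/negP => le_Tm.
have T_gt0 : (0 < #|T|)%N by apply/card_gt0P; exists u.
have lt_Tm : (#|T|.-1 < m)%N by rewrite (leq_trans _ le_Tm) // ltn_predL.
have := min_m _ lt_Tm.
by rewrite (dist_le_card dm).
Qed.

(** [2^-d(u,w)] read off the distance layers, and [0] if [w] is unreachable from [u]. *)
Definition weight (u w : T) : rat :=
  (\sum_(i < #|T|) 2%:R ^- i * (w \in Nset e u i)%:R)%R.

Local Open Scope ring_scope.

Lemma weight_ge0 u w : 0 <= weight u w.
Proof. by apply: sumr_ge0 => i _; rewrite mulr_ge0 ?invr_ge0 ?exprn_ge0. Qed.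

Lemma weight_Nset u w m : w \in Nset e u m -> weight u w = 2%:R ^- m.
Proof.
move=> wm; rewrite /weight (bigD1 (Ordinal (Nset_lt_card wm))) //= wm mulr1.
rewrite big1 ?addr0 // => i ne_im; case wi: (w \in _); last by rewrite mulr0.
by case/eqP: ne_im; apply: val_inj; apply: Nset_uniq wi wm.
Qed.

Lemma weight_edge u x w : e u x -> weight x w <= 2 * weight u w.
Proof.
move=> eux; case: (pickP (fun i : 'I_#|T| => w \in Nset e x i)) => [m wm|none].
  have /Nset_exists[n le_nm wn] := dist_le_edge eux (proj1 (NsetP _ _ _ wm)).
  by rewrite (weight_Nset wm) (weight_Nset wn) ler_expVn2.
rewrite /weight big1 ?mulr_ge0 ?weight_ge0 // => i _.
by rewrite none mulr0.
Qed.

Lemma weight_id w : weight w w = 1.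
Proof.
have dw : dist_le e w w 0 by apply/existsP; exists ord0 => /=.
by rewrite (@weight_Nset w w 0) //; apply/NsetP; split.
Qed.

Lemma sum_weight u : \sum_w weight u w = ef e u.
Proof.
rewrite exchange_big; apply: eq_bigr => i _.
rewrite -mulr_sumr -sum1_card natr_sum; congr (_ * _).
by rewrite [RHS]big_mkcond; apply: eq_bigr => w _; case: (w \in _).
Qed.

Lemma ef_gt0 v : 0 < ef e v.
Proof.
rewrite -sum_weight (bigD1 v) //= weight_id ltr_pwDl //.
by apply: sumr_ge0 => w _; apply: weight_ge0.
Qed.

End Distance.

Section Automorphism.

Variables (T : finType) (e : rel T) (f : {perm T}).
Hypothesis f_aut : forall x y, e (f x) (f y) = e x y.

Lemma walkn_perm k a b : walkn e k (f a) (f b) = walkn e k a b.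
Proof.
elim: k a => [|k IH] a /=; first by rewrite (inj_eq perm_inj).
apply/existsP/existsP => -[u /andP[eau walk_u]].
  by exists ((f^-1)%g u); rewrite -f_aut -IH !permKV eau walk_u.
by exists (f u); rewrite f_aut IH eau walk_u.
Qed.

Lemma dist_le_perm a b i : dist_le e (f a) (f b) i = dist_le e a b i.
Proof. by apply: eq_existsb => k; rewrite walkn_perm. Qed.

Lemma ef_perm u : ef e (f u) = ef e u.
Proof.
apply: eq_bigr => i _; congr (_ * _%:R)%R.
have -> : Nset e u i = f @^-1: Nset e (f u) i.
  apply/setP => w; rewrite !inE !dist_le_perm.
  by case: (nat_of_ord i) => // j; rewrite dist_le_perm.
by rewrite card_preimset //; apply: perm_inj.
Qed.

End Automorphism.

Lemma ef_vertex_transitive (T : finType) (e : rel T) u v :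
  vertex_transitive e -> ef e u = ef e v.
Proof. by move=> vt; have [f [f_aut <-]] := vt v u; apply: ef_perm. Qed.

Section Potential.

Variables (T : finType) (e : rel T).
Local Open Scope ring_scope.

Definition potential (P : pdist T) (w : T) : rat :=
  \sum_u (P u)%:R * weight e u w.

Lemma pebbles_le_potential (P : pdist T) w : (P w)%:R <= potential P w.
Proof.
rewrite /potential (bigD1 w) //= weight_id mulr1 lerDl.
by apply: sumr_ge0 => u _; rewrite mulr_ge0 ?weight_ge0.
Qed.

Lemma potential_move (P Q : pdist T) w : pmove e P Q -> potential Q w <= potential P w.
Proof.
move=> [u [x [eux two_u ->]]] {Q}; set Q := finfun _.
have le_QP y : (Q y + 2 * (y == u) <= P y + (y == x))%N.
  rewrite ffunE; case: (eqVneq y u) => [->|_]; first by rewrite muln1 subnK ?leq_addr.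
  by case: (y == x); rewrite muln0 ?addn1 ?addn0.
have : potential Q w + 2 * weight e u w <= potential P w + weight e x w.
  rewrite -(sumr_eq_natr u (weight e ^~ w)) -(sumr_eq_natr x (weight e ^~ w)).
  rewrite mulr_sumr -!big_split /=; apply: ler_sum => y _.
  rewrite mulrA -!mulrDl ler_wpM2r ?weight_ge0 //.
  by rewrite -natrM -!natrD ler_nat.
by have := weight_edge w eux; lra.
Qed.

Lemma potential_preaches (P Q : pdist T) w :
  preaches e P Q -> potential Q w <= potential P w.
Proof.
elim=> [{}P {}Q /potential_move //| // | P1 Q1 R1 _ le_QP _ le_RQ].
exact: le_trans le_RQ le_QP.
Qed.

Lemma kreachable_le_potential (P : pdist T) w k :
  kreachable e P w k -> k%:R <= potential P w.
Proof.
move=> [Q [reach_Q le_k]]; apply: le_trans (potential_preaches w reach_Q).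
by apply: le_trans (pebbles_le_potential Q w); rewrite ler_nat.
Qed.

Lemma reach_le_potential (P : pdist T) w : (reach e P w)%:R <= potential P w.
Proof.
apply: (big_ind (fun n : nat => n%:R <= potential P w)).
- by apply: sumr_ge0 => u _; rewrite mulr_ge0 ?weight_ge0.
- by move=> a b le_a le_b; rewrite /maxn; case: ifP.
- by move=> k /pdecP; apply: kreachable_le_potential.
Qed.

Lemma exc_lt_potential (P : pdist T) w :
  reachable e P w -> (exc e P w).+1%:R <= potential P w.
Proof.
move=> reach_w; have one_le := kreachable_le_potential reach_w.
rewrite /exc pdecT //.
by have := reach_le_potential P w; case: (reach e P w).
Qed.

Lemma sum_potential (P : pdist T) : \sum_w potential P w = \sum_u (P u)%:R * ef e u.
Proof.
rewrite exchange_big; apply: eq_bigr => u _.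
by rewrite -mulr_sumr sum_weight.
Qed.

End Potential.

Unset Implicit Arguments.

Theorem corollary2p2 (T : finType) (e : rel T) (v : T) (P : pdist T) :
  simple_graph e -> vertex_transitive e -> solvable e P ->
  ((#|T|%:R + (TE e P)%:R) / ef e v <= (psize P)%:R :> rat)%R.
Proof.
move=> _ vt solP; rewrite ler_pdivrMr ?ef_gt0 //.
have -> : (#|T|%:R + (TE e P)%:R : rat)%R = (\sum_w (exc e P w).+1%:R)%R.
  by rewrite -natrD /TE -sum1_card -big_split natr_sum; apply: eq_bigr.
apply: le_trans (ler_sum _ (fun w _ => exc_lt_potential (solP w))) _.
rewrite sum_potential /psize natr_sum mulr_suml.
by under eq_bigr => u _ do rewrite (ef_vertex_transitive u v vt).
Qed.
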